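(* Let $G$ be a flag with vertices $v_1,\dots,v_n$ ordered by increasing $x$-coordinate. Let $V^+=\{v_i: v_i \text{ is above } v_1v_2\}$ and $V^-=\{v_i: v_i \text{ is below } v_1v_2\}$. Then for $v_{i_1},v_{i_2}\in V^+$ with $i_1<i_2$ we have $v_1v_{i_1}\prec v_1v_{i_2}$, and for $v_{i_1},v_{i_2}\in V^-$ with $i_1<i_2$ we have $v_1v_{i_2}\prec v_1v_{i_1}$.
   Context: Let $\mathcal C=S^1\times\mathbb R$ ($S^1=[0,1]$ with $0\sim1$), points $p=(p_x,p_y)$ with $0\le p_x<1$. A flag is a graph drawn on $\mathcal C$ (vertices distinct points, edges Jordan arcs, no overlapping edges, no edge through a vertex) that is complete, simple (any two edges meet in at most one point: a common endpoint or a proper crossing), monotone (every edge meets each vertical line $l_{x=a}=\{p:p_x=a\}$ at most once, no two vertices share an $x$-coordinate, no vertex has $x$-coordinate $0$), and such that $l_{x=0}$ meets every edge in its relative interior. A point $v$ is related to an $x$-monotone curve $e$ if $l_{x=v_x}$ meets $e$ in its relative interior; then $v$ is below (above) $e$ if $v_y$ is smaller (larger) than the $y$-coordinate of $l_{x=v_x}\cap e$. Two $x$-monotone curves $e,f$ are related if they do not cross, some vertical line meets both relative interiors, and all such lines meet them in the same vertical order; then $e\prec f$ means that on every vertical line meeting both relative interiors, $e$'s point has $y$-coordinate at most that of $f$'s point. *)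

From HB Require Import structures.
From mathcomp Require Import all_boot all_order all_algebra.
From mathcomp Require Import all_classical all_reals all_analysis.
Set Implicit Arguments. Unset Strict Implicit. Unset Printing Implicit Defensive.
Import Order.TTheory GRing.Theory Num.Theory numFieldNormedType.Exports.
Local Open Scope ring_scope.
Local Open Scope classical_set_scope.

Section Cylinder.
Context {R : realType}.

(* A point p = (p_x, p_y) of C = S^1 x R, with 0 <= p_x < 1. *)
Definition pt := (R * R)%type.

(* fractional part: the covering map R -> S^1 = [0,1) *)
Definition frac (x : R) : R := x - (Num.floor x)%:~R.

(* A curve on C, given by a lift [0,1] -> R x R of a map [0,1] -> C
   (every continuous map [0,1] -> C has such a continuous lift). *)
Record carc := Carc { ax : R -> R ; ay : R -> R }.

Definition arc_at (c : carc) (t : R) : pt := (frac (ax c t), ay c t).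

Definition pts (c : carc) : set pt := [set p | exists t, 0 <= t <= 1 /\ arc_at c t = p].
Definition relint (c : carc) : set pt := [set p | exists t, 0 < t < 1 /\ arc_at c t = p].
Definition endpts (c : carc) : set pt := [set arc_at c 0; arc_at c 1].

Definition jordan_arc (c : carc) : Prop :=
  {within (`[0, 1]%classic : set R), continuous (ax c)} /\ {within (`[0, 1]%classic : set R), continuous (ay c)} /\
  (forall s t, 0 <= s <= 1 -> 0 <= t <= 1 -> arc_at c s = arc_at c t -> s = t).

Definition xmonotone (c : carc) : Prop :=
  forall p q, pts c p -> pts c q -> p.1 = q.1 -> p = q.

Definition below (v : pt) (e : carc) : Prop :=
  exists y, relint e (v.1, y) /\ v.2 < y.
Definition above (v : pt) (e : carc) : Prop :=
  exists y, relint e (v.1, y) /\ y < v.2.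

Definition side_order (e f : carc) (a : R) (lt_ef : bool) : Prop :=
  forall y z, relint e (a, y) -> relint f (a, z) -> if lt_ef then y < z else z < y.
Definition proper_crossing (e f : carc) (p : pt) : Prop :=
  relint e p /\ relint f p /\
  exists eps : R, 0 < eps /\ exists b : bool,
    (forall s, 0 < s < eps -> side_order e f (frac (p.1 - s)) b) /\
    (forall s, 0 < s < eps -> side_order e f (frac (p.1 + s)) (~~ b)).

Definition cross (e f : carc) : Prop := exists p, proper_crossing e f p.

Definition weakly_below (e f : carc) : Prop :=
  forall a y z, relint e (a, y) -> relint f (a, z) -> y <= z.

Definition related (e f : carc) : Prop :=
  ~ cross e f /\
  (exists a y z, relint e (a, y) /\ relint f (a, z)) /\
  (weakly_below e f \/ weakly_below f e).

Definition prec (e f : carc) : Prop := related e f /\ weakly_below e f.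

(* A flag with vertices v 0, ..., v (n-1) (indexed by increasing x-coordinate)
   and, for i < j < n, the edge E i j joining v i and v j. *)
Definition flag (n : nat) (v : nat -> pt) (E : nat -> nat -> carc) : Prop :=
  (forall i, (i < n)%N -> 0 < (v i).1 < 1) /\
  (forall i j, (i < j < n)%N -> (v i).1 < (v j).1) /\
  (forall i j, (i < j < n)%N ->
     jordan_arc (E i j) /\ endpts (E i j) = [set v i; v j]) /\
  (forall i j k, (i < j < n)%N -> (k < n)%N -> ~ relint (E i j) (v k)) /\
  (forall i j k l, (i < j < n)%N -> (k < l < n)%N -> (i, j) <> (k, l) ->
     (forall p q, pts (E i j) p -> pts (E k l) p ->
                  pts (E i j) q -> pts (E k l) q -> p = q) /\
     (forall p, pts (E i j) p -> pts (E k l) p ->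
        (endpts (E i j) p /\ endpts (E k l) p) \/ proper_crossing (E i j) (E k l) p)) /\
  (forall i j, (i < j < n)%N -> xmonotone (E i j)) /\
  (forall i j, (i < j < n)%N -> exists y, relint (E i j) (0, y)).

End Cylinder.

From Pilot Require Import Defs.
From HB Require Import structures.
From mathcomp Require Import all_boot all_order all_algebra.
From mathcomp Require Import all_classical all_reals all_analysis.
From mathcomp Require Import lra zify.
Set Implicit Arguments. Unset Strict Implicit. Unset Printing Implicit Defensive.
Import Order.TTheory GRing.Theory Num.Theory numFieldNormedType.Exports.
Local Open Scope ring_scope.
Local Open Scope classical_set_scope.

(* Cut the cylinder along l_{x=0}: every edge v_i v_j (i < j) becomes the graph of a
   continuous function on [x_j - 1, x_i], and two edges sharing an endpoint meet nowhere
   else, so their vertical order is constant on the common part of their domains.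
   Let v_a, v_b (2 <= a < b) lie above v_0 v_1 and suppose v_0 v_b is below v_0 v_a at
   some point. Then it is so at v_b, so v_a v_b, which also leaves v_b, stays below
   v_0 v_a and reaches x_0 below v_0; meanwhile v_1 v_b, which leaves v_b above v_0 v_1,
   reaches x_0 above v_0. Hence v_a v_b stays below v_1 v_b until x_1, i.e. passes below
   v_1, and yet ends at v_a above v_0 v_1: it crosses v_0 v_1 once in (x_1, x_a) and once
   in (x_b - 1, x_0), contradicting simplicity. Below v_0 v_1 the picture is mirrored. *)

Local Notation frac := Defs.frac. (* not [fraction.frac] *)

Section Frac.
Variable R : realType.
Implicit Types u w a : R.

Lemma fracDz u (k : int) : frac (u + k%:~R) = frac u.
Proof.
rewrite /frac floorDrz ?intrKfloor; last by rewrite intr_int.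
rewrite rmorphD /=; lra.
Qed.

Lemma fracD1 u : frac (u + 1) = frac u.
Proof. exact: (fracDz u 1). Qed.

Lemma fracB1 u : frac (u - 1) = frac u.
Proof. by rewrite -fracD1 subrK. Qed.

Lemma frac_itv u (k : int) : k%:~R <= u < k%:~R + 1 -> frac u = u - k%:~R.
Proof. by move=> hu; rewrite /frac (@floor_def _ _ k) // rmorphD. Qed.

Lemma frac_id u : 0 <= u < 1 -> frac u = u.
Proof. by move=> hu; rewrite (frac_itv (k := 0)) ?subr0 // add0r. Qed.

Lemma frac_lift_cases u a : -1 <= u < 1 -> frac u = a -> u = a \/ u = a - 1.
Proof.
move=> hu <-; have [u0|u0] := leP 0 u; first by left; rewrite frac_id // u0; lra.
by right; rewrite -fracD1 frac_id; lra.
Qed.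

Lemma frac_lift_neq u a : a - 1 < u < a -> 0 <= a < 1 -> frac u <> a.
Proof. by move=> hu ha /(frac_lift_cases _)[]; lra. Qed.

Lemma frac_inj_near u w : -1 <= u < 1 -> -1 <= w < 1 -> u - w < 1 -> w - u < 1 ->
  frac u = frac w -> u = w.
Proof.
move=> hu hw uw wu /(frac_lift_cases hu) [] eu;
  by have [] := frac_lift_cases hw (erefl (frac w)); lra.
Qed.

End Frac.

Section RealContinuity.
Variable R : realType.
Implicit Types (f g : R -> R) (a b u : R).

Definition clamp a b u := Num.min (Num.max u a) b.

Lemma clamp_itv a b u : a <= b -> `[a, b] (clamp a b u).
Proof. by move=> ab; rewrite /= in_itv /= /clamp le_min ge_min ab lexx le_max lexx !orbT. Qed.

Lemma clamp_id a b u : a <= u <= b -> clamp a b u = u.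
Proof. by case/andP=> au ub; rewrite /clamp max_l // min_l. Qed.

Lemma clamp_continuous a b : continuous (clamp a b).
Proof.
move=> u; apply: (@continuous_min _ _ (fun u => Num.max u a) (fun=> b)); last exact: cvg_cst.
by apply: (@continuous_max _ _ id (fun=> a)); [exact: cvg_id | exact: cvg_cst].
Qed.

Lemma continuous_clamp_comp f a b : a <= b ->
  {within `[a, b], continuous f} -> continuous (f \o clamp a b).
Proof.
move=> ab /subspace_continuousP fc u; apply: (cvg_comp _ _ _ (fc _ (clamp_itv _ ab))).
move=> P /= hP.
have : nbhs u (fun w => `[a, b] (clamp a b w) -> P (clamp a b w)) := clamp_continuous hP.
by apply: filterS => w; apply; exact: clamp_itv.
Qed.

Lemma continuous_addr_comp f a : continuous f -> continuous (fun u => f (u + a)).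
Proof.
move=> fc u; apply: (@continuous_comp _ _ _ (fun u => u + a) f); last exact: fc.
by apply: (@continuousD _ _ _ id (fun=> a)); [exact: cvg_id | exact: cvg_cst].
Qed.

Lemma ivt_root f a b : a <= b -> continuous f -> f a <= 0 -> 0 <= f b ->
  exists2 c, a <= c <= b & f c = 0.
Proof.
move=> ab fc fa fb.
have [|c] := IVT ab (continuous_subspaceT fc) (_ : Num.min (f a) (f b) <= 0 <= _).
  by rewrite ge_min le_max fa fb orbT.
by rewrite in_itv; exists c.
Qed.

Lemma ivt_root_strict f a b : a <= b -> continuous f -> f a < 0 -> 0 < f b ->
  exists2 c, a < c < b & f c = 0.
Proof.
move=> ab fc fa fb; have [c /andP[ac cb] f0] := ivt_root ab fc (ltW fa) (ltW fb).
exists c => //; rewrite !lt_neqAle ac cb !andbT; apply/andP; split; apply/eqP => e.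
  by move: fa; rewrite e f0 ltxx.
by move: fb; rewrite -e f0 ltxx.
Qed.

Lemma lt_continuous_apart f g a b : a <= b -> continuous f -> continuous g ->
  (forall u, a <= u <= b -> f u != g u) -> (f a < g a) = (f b < g b).
Proof.
move=> ab fc gc.
have forward f' g' : continuous f' -> continuous g' ->
    (forall u, a <= u <= b -> f' u != g' u) -> f' a < g' a -> f' b < g' b.
  move=> f'c g'c apart lt_a; rewrite ltNge; apply/negP => le_b.
  have [|||c cab] := @ivt_root (fun u => f' u - g' u) a b ab.
  - by move=> u; exact: continuousB (f'c u) (g'c u).
  - by rewrite subr_le0 ltW.
  - by rewrite subr_ge0.
  by move/eqP; rewrite subr_eq0 (negbTE (apart c cab)).
move=> apart; apply/idP/idP; first exact: forward.
move=> lt_b; rewrite lt_neqAle apart ?lexx ?ab //= leNgt; apply/negP => gf_a.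
have apart' u : a <= u <= b -> g u != f u by move=> hu; rewrite eq_sym apart.
by have := forward g f gc fc apart' gf_a; rewrite ltNge (ltW lt_b).
Qed.

End RealContinuity.

(* [hij] is the lifted edge v_i v_j, and [x0 < x1 < xa < xb] are the abscissas of
   v_0, v_1, v_a, v_b; [h01] lives on [x1 - 1, x0], hence its translate near v_a. *)
Section Crossing.
Variable R : realType.
Variables (h01 h0a h0b hab h1b : R -> R) (x0 x1 xa xb : R).
Hypotheses (xb0 : xb - 1 < x0) (x01 : x0 < x1) (x1a : x1 < xa).
Hypotheses (c01 : continuous h01) (c0a : continuous h0a) (c0b : continuous h0b)
  (cab : continuous hab) (c1b : continuous h1b).
Hypotheses (v0 : h0a x0 = h01 x0) (v1 : h1b x1 = h01 (x1 - 1))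
  (vb0 : h0b (xb - 1) = hab (xb - 1)) (vb1 : h1b (xb - 1) = hab (xb - 1)).
Hypotheses (apart_0a_0b : forall u, xb - 1 <= u < x0 -> h0a u != h0b u)
  (apart_ab_0a : forall u, xb - 1 <= u <= x0 -> hab u != h0a u)
  (apart_01_1b : forall u, xb - 1 <= u <= x0 -> h01 u != h1b u)
  (apart_ab_1b : forall u, x0 <= u <= x1 -> hab u != h1b u).
Hypothesis meet_ab_01_once : ~ (exists u1 u2, x1 < u1 < xa /\ xb - 1 < u2 < x0 /\
  hab u1 = h01 (u1 - 1) /\ hab u2 = h01 u2).

Lemma lifted_edges_ordered : h01 (xa - 1) < hab xa -> h01 (xb - 1) < hab (xb - 1) ->
  forall u, xb - 1 <= u < x0 -> h0a u < h0b u.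
Proof.
move=> above_a above_b u /andP[bu u0]; rewrite ltNge; apply/negP => le_ba.
have lt_ba : h0b u < h0a u by rewrite lt_neqAle le_ba andbT eq_sym apart_0a_0b ?bu.
have lt_b0 : hab (xb - 1) < h0a (xb - 1).
  rewrite -vb0 (lt_continuous_apart bu c0b c0a) // => w hw.
  by rewrite eq_sym apart_0a_0b //; lra.
have lt_0 : hab x0 < h01 x0.
  by rewrite -v0 -(lt_continuous_apart (ltW xb0) cab c0a apart_ab_0a).
have gt_0 : h01 x0 < h1b x0.
  by rewrite -(lt_continuous_apart (ltW xb0) c01 c1b apart_01_1b) vb1.
have lt_1 : hab x1 < h01 (x1 - 1).
  rewrite -v1 -(lt_continuous_apart (ltW x01) cab c1b apart_ab_1b).
  exact: lt_trans lt_0 gt_0.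
have cA : continuous (fun w => hab w - h01 (w - 1)).
  by move=> w; apply: cvgB; [exact: cab | exact: continuous_addr_comp].
have cB : continuous (fun w => h01 w - hab w).
  by move=> w; apply: cvgB; [exact: c01 | exact: cab].
have [u1 hu1 e1] : exists2 u1, x1 < u1 < xa & hab u1 - h01 (u1 - 1) = 0.
  by apply: ivt_root_strict (ltW x1a) cA _ _; rewrite /=; lra.
have [u2 hu2 e2] : exists2 u2, xb - 1 < u2 < x0 & h01 u2 - hab u2 = 0.
  by apply: ivt_root_strict (ltW xb0) cB _ _; rewrite /=; lra.
apply: meet_ab_01_once; exists u1, u2; do 2 split=> //.
by split; lra.
Qed.

End Crossing.

Lemma lifted_edges_ordered_rev (R : realType) (h01 h0a h0b hab h1b : R -> R)
  (x0 x1 xa xb : R) :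
  xb - 1 < x0 -> x0 < x1 -> x1 < xa ->
  continuous h01 -> continuous h0a -> continuous h0b -> continuous hab -> continuous h1b ->
  h0a x0 = h01 x0 -> h1b x1 = h01 (x1 - 1) ->
  h0b (xb - 1) = hab (xb - 1) -> h1b (xb - 1) = hab (xb - 1) ->
  (forall u, xb - 1 <= u < x0 -> h0a u != h0b u) ->
  (forall u, xb - 1 <= u <= x0 -> hab u != h0a u) ->
  (forall u, xb - 1 <= u <= x0 -> h01 u != h1b u) ->
  (forall u, x0 <= u <= x1 -> hab u != h1b u) ->
  ~ (exists u1 u2, x1 < u1 < xa /\ xb - 1 < u2 < x0 /\
      hab u1 = h01 (u1 - 1) /\ hab u2 = h01 u2) ->
  hab xa < h01 (xa - 1) -> hab (xb - 1) < h01 (xb - 1) ->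
  forall u, xb - 1 <= u < x0 -> h0b u < h0a u.
Proof.
move=> xb0 x01 x1a c01 c0a c0b cab c1b v0 v1 vb0 vb1 N0 N1 N2 N3 N4 below_a below_b u hu.
have cN (h : R -> R) : continuous h -> continuous (fun w => - h w).
  by move=> hc w; exact: continuousN (hc w).
rewrite -ltrN2; apply: (@lifted_edges_ordered _ (fun w => - h01 w) (fun w => - h0a w)
  (fun w => - h0b w) (fun w => - hab w) (fun w => - h1b w) x0 x1 xa xb) => //;
  try exact: cN; rewrite ?v0 ?v1 ?vb0 ?vb1 ?ltrN2 //; try by move=> w hw; rewrite eqr_opp; auto.
case=> u1 [u2 [hu1 [hu2 [e1 e2]]]]; apply: N4; exists u1, u2.
by do 3 split=> //; apply: oppr_inj.
Qed.

Section LiftGraph.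
Variable R : realType.
Implicit Types (c : @carc R) (p q : @pt R).

(* Cutting C along l_{x=0}, an x-monotone edge from p to q that crosses l_{x=0}
   becomes the graph of h over [q_x - 1, p_x], wrapped onto C by u |-> (frac u, h u). *)
Record lift_graph c p q (h : R -> R) : Prop := LiftGraph {
  lift_graph_cont : continuous h;
  lift_graph_p : h p.1 = p.2;
  lift_graph_q : h (q.1 - 1) = q.2;
  lift_graph_pts : forall u, q.1 - 1 <= u <= p.1 -> pts c (frac u, h u);
  lift_graph_relint : forall a y, relint c (a, y) ->
    exists2 u, q.1 - 1 < u < p.1 & frac u = a /\ y = h u }.

Lemma relint_pts c P : relint c P -> pts c P.
Proof. by case=> t [ht e]; exists t; split=> //; lra. Qed.

Lemma lift_graph_sub c c' p q h : pts c' `<=` pts c -> relint c `<=` relint c' ->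
  lift_graph c' p q h -> lift_graph c p q h.
Proof.
move=> sub sup [hc hp hq hpts hrel]; split=> // [u hu | a y /sup]; last exact: hrel.
exact/sub/hpts.
Qed.

Lemma set2_lt_eq (a b p q : @pt R) : [set a; b] = [set p; q] -> b.1 < a.1 -> p.1 < q.1 ->
  a = q /\ b = p.
Proof.
move=> e ba pq.
have hp : [set a; b] p by rewrite e; left.
have hq : [set a; b] q by rewrite e; right.
clear e.
by case: hp hq pq => -> [] -> pq; split=> //; exfalso; lra.
Qed.

Lemma frac_inj_width_lt1 (X : R -> R) : continuous X -> X 0 <= X 1 ->
  (forall s t, 0 <= s <= 1 -> 0 <= t <= 1 -> frac (X s) = frac (X t) -> s = t) ->
  X 1 - X 0 < 1.
Proof.
move=> cX X01 finj; rewrite ltNge; apply/negP => wide.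
have cX1 : continuous (fun t => X t - (X 0 + 1)).
  by move=> t; apply: cvgB; [exact: cX | exact: cvg_cst].
have [||t ht /= e] := ivt_root ler01 cX1; rewrite /=; try lra.
have t0 : t = 0.
  apply: finj; rewrite ?ht ?lexx ?ler01 //.
  have -> : X t = X 0 + 1 by lra.
  exact: fracD1.
by move: e; rewrite t0; lra.
Qed.

Lemma continuous_inverse_increasing (X : R -> R) : continuous X ->
  (forall s t, 0 <= s <= 1 -> 0 <= t <= 1 -> s < t -> X s < X t) ->
  exists g : R -> R, continuous g /\ forall t, 0 <= t <= 1 -> g (X t) = t.
Proof.
move=> cX mono.
have X_le s t : 0 <= s <= 1 -> 0 <= t <= 1 -> s <= t -> X s <= X t.
  by move=> hs ht; rewrite le_eqVlt => /orP[/eqP -> // | st]; exact/ltW/mono.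
have X01 : X 0 < X 1 by apply: mono; rewrite ?lexx ?ler01.
pose g w := xget 0 [set t | 0 <= t <= 1 /\ X t = w].
have gK t : 0 <= t <= 1 -> g (X t) = t.
  move=> ht; have [hg eg] : [set s | 0 <= s <= 1 /\ X s = X t] (g (X t)).
    exact: (@xgetI _ 0 _ t).
  case: (ltgtP (g (X t)) t) => // [lt|gt]; move/eqP: eg.
  - by have := mono _ _ hg ht lt => /lt_eqF ->.
  - by have := mono _ _ ht hg gt => /gt_eqF ->.
have gc : {within `[X 0, X 1], continuous g}.
  apply: segment_can_le_continuous ler01 (continuous_subspaceT cX) _ => t.
  by rewrite in_itv /=; exact: gK.
exists (g \o clamp (X 0) (X 1)); split; first exact: continuous_clamp_comp (ltW X01) gc.
by move=> t ht; rewrite /= clamp_id ?gK // !X_le ?lexx ?ler01 //; lra.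
Qed.

Lemma lift_graph_increasing c p q :
  continuous (ax c) -> continuous (ay c) ->
  (forall s t, 0 <= s <= 1 -> 0 <= t <= 1 -> s < t -> ax c s < ax c t) ->
  (forall s t, 0 <= s <= 1 -> 0 <= t <= 1 -> frac (ax c s) = frac (ax c t) -> s = t) ->
  (exists2 t, 0 < t < 1 & frac (ax c t) = 0) ->
  endpts c = [set p; q] -> 0 < p.1 -> p.1 < q.1 -> q.1 < 1 ->
  exists h, lift_graph c p q h.
Proof.
move=> cX cY mono finj [t0 ht0 ft0] hend p0 pq q1.
have X01 : ax c 0 < ax c 1 by apply: mono; rewrite ?lexx ?ler01.
have width := frac_inj_width_lt1 cX (ltW X01) finj.
(* the edge meets l_{x=0} where [ax c] passes the integer [k] *)
set k := Num.floor (ax c t0).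
have Xk : ax c t0 = k%:~R by move/eqP: ft0; rewrite subr_eq0 => /eqP.
have k0 : ax c 0 < k%:~R by rewrite -Xk; apply: mono; lra.
have k1 : k%:~R < ax c 1 by rewrite -Xk; apply: mono; lra.
have fX0 : frac (ax c 0) = ax c 0 + 1 - k%:~R.
  by rewrite -fracD1 (frac_itv (k := k)) //; lra.
have fX1 : frac (ax c 1) = ax c 1 - k%:~R by rewrite (frac_itv (k := k)) //; lra.
have [eq_q eq_p] : arc_at c 0 = q /\ arc_at c 1 = p.
  by apply: set2_lt_eq hend _ pq; rewrite /= fX0 fX1; lra.
have [g [gc gK]] := continuous_inverse_increasing cX mono.
have cYg : continuous (ay c \o g) by move=> w; exact: continuous_comp (gc w) (cY _).
pose h u := ay c (g (u + k%:~R)).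
have hX t : 0 <= t <= 1 -> h (ax c t - k%:~R) = ay c t.
  by move=> ht; rewrite /h subrK gK.
have fracX t : frac (ax c t - k%:~R) = frac (ax c t).
  by rewrite -(fracDz (ax c t - k%:~R) k) subrK.
exists h; split.
- exact: (continuous_addr_comp cYg).
- by rewrite -eq_p /= fX1 hX ?lexx ?ler01.
- by rewrite -eq_q /= fX0 (_ : _ - 1 = ax c 0 - k%:~R) ?hX ?lexx ?ler01 //; lra.
- move=> u; rewrite -eq_p -eq_q /= fX0 fX1 => hu.
  have cXu : continuous (fun t => ax c t - (u + k%:~R)).
    by move=> t; apply: cvgB; [exact: cX | exact: cvg_cst].
  have [||t ht /= e] := ivt_root ler01 cXu; rewrite /=; try lra.
  have -> : u = ax c t - k%:~R by lra.
  by exists t; split=> //; rewrite /arc_at fracX hX.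
- move=> a y [t [ht [<- <-]]]; exists (ax c t - k%:~R); last by rewrite fracX hX //; lra.
  have := mono 0 t; have := mono t 1; rewrite -eq_p -eq_q /= fX0 fX1; lra.
Qed.

Section Reparam.
Variables (c : @carc R) (phi : R -> R).
Hypotheses (phi_itv : forall t, 0 <= t <= 1 -> 0 <= phi t <= 1)
  (phi_open : forall t, 0 < t < 1 -> 0 < phi t < 1)
  (phiK : forall t, 0 <= t <= 1 -> phi (phi t) = t).
Hypothesis finj : forall s t, 0 <= s <= 1 -> 0 <= t <= 1 ->
  frac (ax c s) = frac (ax c t) -> s = t.

(* With [phi] either [id] or [fun t => 1 - t]: the parametrisation of [c] extended to R
   by clamping, and reversed if needed so that its abscissa increases. *)
Definition reparam01 : @carc R :=
  Carc (fun t => ax c (clamp 0 1 (phi t))) (fun t => ay c (clamp 0 1 (phi t))).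

Lemma arc_at_reparam01 t : 0 <= t <= 1 -> arc_at reparam01 t = arc_at c (phi t).
Proof. by move=> ht; rewrite /arc_at /= clamp_id ?phi_itv. Qed.

Lemma reparam01_pts_sub : pts reparam01 `<=` pts c.
Proof.
move=> _ [t [ht <-]]; exists (phi t); split; first exact: phi_itv.
by rewrite arc_at_reparam01.
Qed.

Lemma reparam01_relint_sup : relint c `<=` relint reparam01.
Proof.
move=> _ [t [ht <-]]; have ht' : 0 <= t <= 1 by lra.
by exists (phi t); split; [exact: phi_open | rewrite arc_at_reparam01 ?phiK ?phi_itv].
Qed.

Lemma reparam01_continuous (f : R -> R) : continuous phi ->
  {within `[0, 1], continuous f} -> continuous (fun t => f (clamp 0 1 (phi t))).
Proof.
move=> phi_cont fc t; apply: (@continuous_comp _ _ _ phi (f \o clamp 0 1)).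
  exact: phi_cont.
exact: continuous_clamp_comp.
Qed.

Lemma lift_graph_reparam p q : continuous phi ->
  {within `[0, 1], continuous (ax c)} -> {within `[0, 1], continuous (ay c)} ->
  (forall s t, 0 <= s <= 1 -> 0 <= t <= 1 -> s < t -> ax c (phi s) < ax c (phi t)) ->
  (exists2 t, 0 < t < 1 & frac (ax c t) = 0) ->
  [set arc_at c (phi 0); arc_at c (phi 1)] = [set p; q] ->
  0 < p.1 -> p.1 < q.1 -> q.1 < 1 -> exists h, lift_graph c p q h.
Proof.
move=> phi_cont cX cY mono [t0 ht0 ft0] hend p0 pq q1.
have [||||||h hh] := @lift_graph_increasing reparam01 p q _ _ _ _ _ _ p0 pq q1.
- exact: reparam01_continuous phi_cont cX.
- exact: reparam01_continuous phi_cont cY.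
- by move=> s t hs ht st; rewrite /= !clamp_id ?phi_itv //; exact: mono.
- move=> s t hs ht; rewrite /= !clamp_id ?phi_itv // => /finj e.
  by rewrite -(phiK hs) -(phiK ht) e ?phi_itv.
- have ht0' : 0 <= t0 <= 1 by lra.
  by exists (phi t0); [exact: phi_open | rewrite /= clamp_id ?phiK ?phi_itv].
- by rewrite /endpts !arc_at_reparam01 ?lexx ?ler01.
by exists h; exact: lift_graph_sub reparam01_pts_sub reparam01_relint_sup hh.
Qed.

End Reparam.

Lemma edge_lift_graph c p q : jordan_arc c -> endpts c = [set p; q] -> xmonotone c ->
  (exists y, relint c (0, y)) -> 0 < p.1 -> p.1 < q.1 -> q.1 < 1 ->
  exists h, lift_graph c p q h.
Proof.
move=> [cX [cY inj]] hend hmono [y0 [t0 [ht0 [ft0 _]]]] p0 pq q1.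
have finj s t : 0 <= s <= 1 -> 0 <= t <= 1 -> frac (ax c s) = frac (ax c t) -> s = t.
  move=> hs ht e; apply: (inj s t hs ht); apply: hmono; [by exists s | by exists t | exact: e].
have Xinj : {in `[0, 1]%R &, injective (ax c)}.
  by move=> s t; rewrite !in_itv /= => hs ht e; apply: finj => //; rewrite e.
have zero : exists2 t, 0 < t < 1 & frac (ax c t) = 0 by exists t0.
case: (itv_continuous_inj_mono cX Xinj) => [inc | dec].
  have mono s t : 0 <= s <= 1 -> 0 <= t <= 1 -> s < t -> ax c s < ax c t.
    by move=> hs ht; apply: inc; rewrite in_itv.
  exact: (@lift_graph_reparam c id (fun _ ht => ht) (fun _ ht => ht) (fun _ _ => erefl)
    finj p q (fun _ => cvg_id) cX cY mono zero hend p0 pq q1).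
have rev_itv (t : R) : 0 <= t <= 1 -> 0 <= 1 - t <= 1 by move=> *; lra.
have rev_open (t : R) : 0 < t < 1 -> 0 < 1 - t < 1 by move=> *; lra.
have revK (t : R) : 0 <= t <= 1 -> 1 - (1 - t) = t by move=> *; lra.
have rev_cont : continuous (fun t : R => 1 - t).
  by move=> t; apply: cvgB; [exact: cvg_cst | exact: cvg_id].
have mono s t : 0 <= s <= 1 -> 0 <= t <= 1 -> s < t -> ax c (1 - s) < ax c (1 - t).
  by move=> hs ht st; apply: dec; rewrite ?in_itv /=; lra.
have hend' : [set arc_at c (1 - 0); arc_at c (1 - 1)] = [set p; q].
  by rewrite subr0 subrr setUC.
exact: (lift_graph_reparam rev_itv rev_open revK finj rev_cont cX cY mono zero hend' p0 pq q1).
Qed.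

End LiftGraph.

Section Flag.
Variables (R : realType) (n : nat) (v : nat -> @pt R) (E : nat -> nat -> @carc R).
Hypothesis n_ge2 : (2 <= n)%N.
Hypothesis flagE : flag n v E.
Local Notation x k := (v k).1.
Local Notation y k := (v k).2.

Lemma vertex_x_itv i : (i < n)%N -> 0 < x i < 1.
Proof. by case: flagE => H _; apply: H. Qed.

Lemma vertex_x_lt i j : (i < j < n)%N -> x i < x j.
Proof. by case: flagE => _ [H _]; apply: H. Qed.

Lemma vertex_x0_gt0 : 0 < x 0.
Proof. by case/andP: (vertex_x_itv (leq_trans (isT : 0 < 2)%N n_ge2)). Qed.

Lemma vertex_x_chain a b : (2 <= a)%N -> (a < b < n)%N ->
  [/\ 0 < x 0, x 0 < x 1, x 1 < x a, x a < x b & x b < 1].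
Proof.
move=> a2 /andP[ab bn]; have [_ xb1] := andP (vertex_x_itv bn).
by split=> //; [exact: vertex_x0_gt0 | apply: vertex_x_lt; lia ..].
Qed.

Lemma vertex_pts i j : (i < j < n)%N -> pts (E i j) (v i) /\ pts (E i j) (v j).
Proof.
case: flagE => _ [_ [he _]] /he[_ hend].
have endpts_pts w : [set v i; v j] w -> pts (E i j) w.
  by rewrite -hend => -[|] ->; [exists 0 | exists 1]; rewrite lexx ler01.
by split; apply: endpts_pts; [left | right].
Qed.

Lemma edges_meet_once i j k l : (i < j < n)%N -> (k < l < n)%N -> (i, j) <> (k, l) ->
  forall P Q, pts (E i j) P -> pts (E k l) P -> pts (E i j) Q -> pts (E k l) Q -> P = Q.
Proof.
move=> hij hkl ne; case: flagE => _ [_ [_ [_ [hs _]]]].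
by have [] := hs _ _ _ _ hij hkl ne.
Qed.

(* An arbitrary function unless [i < j < n]. *)
Definition edge_lift i j : R -> R :=
  xget (fun=> 0) [set h | lift_graph (E i j) (v i) (v j) h].

Lemma edge_liftP i j : (i < j < n)%N -> lift_graph (E i j) (v i) (v j) (edge_lift i j).
Proof.
move=> hij; apply: xgetPex; case: flagE => _ [xlt [he [_ [_ [hmono hzero]]]]].
have [hjord hend] := he i j hij; have /andP[ij jn] := hij.
have [xi0 _] := andP (vertex_x_itv (ltn_trans ij jn)); have [_ xj1] := andP (vertex_x_itv jn).
exact: edge_lift_graph hjord hend (hmono _ _ hij) (hzero _ _ hij) xi0 (xlt _ _ hij) xj1.
Qed.

Lemma edge_lift_cont i j : (i < j < n)%N -> continuous (edge_lift i j).
Proof. by move/edge_liftP/lift_graph_cont. Qed.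

Lemma edge_lifts_apart i j k l c u : (i < j < n)%N -> (k < l < n)%N -> (i, j) <> (k, l) ->
  (c < n)%N -> pts (E i j) (v c) -> pts (E k l) (v c) ->
  x j - 1 <= u <= x i -> x l - 1 <= u <= x k -> x c - 1 < u < x c ->
  edge_lift i j u != edge_lift k l u.
Proof.
move=> hij hkl ne cn cij ckl uij ukl uc; apply/eqP => e.
have Pij : pts (E i j) (frac u, edge_lift i j u) by apply: (lift_graph_pts (edge_liftP hij)).
have Pkl : pts (E k l) (frac u, edge_lift i j u).
  by rewrite e; apply: (lift_graph_pts (edge_liftP hkl)).
have hv := edges_meet_once hij hkl ne Pij Pkl cij ckl.
have [xc0 xc1] := andP (vertex_x_itv cn).
by apply: (frac_lift_neq uc); [lra | rewrite -hv].
Qed.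

Section Quadrilateral.
Variables a b : nat.
Hypotheses (a_ge2 : (2 <= a)%N) (hab : (a < b < n)%N).

Let i01 : (0 < 1 < n)%N. Proof. lia. Qed.
Let i0a : (0 < a < n)%N. Proof. lia. Qed.
Let i0b : (0 < b < n)%N. Proof. lia. Qed.
Let i1b : (1 < b < n)%N. Proof. lia. Qed.
Let n0 : (0 < n)%N. Proof. lia. Qed.

Lemma lift_0a_0b_apart u : x b - 1 <= u < x 0 -> edge_lift 0 a u != edge_lift 0 b u.
Proof.
have [x0 x01 x1a xab xb1] := vertex_x_chain a_ge2 hab => hu.
have ne : (0, a) <> (0, b)%N by case=> e; move: hab; rewrite e ltnn.
apply: (edge_lifts_apart i0a i0b ne n0);
  by [exact: (vertex_pts i0a).1 | exact: (vertex_pts i0b).1 | lra].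
Qed.

Lemma lift_ab_0a_apart u : x b - 1 <= u <= x 0 -> edge_lift a b u != edge_lift 0 a u.
Proof.
have [x0 x01 x1a xab xb1] := vertex_x_chain a_ge2 hab => hu.
have ne : (a, b) <> (0, a)%N by case=> e; move: a_ge2; rewrite e.
apply: (edge_lifts_apart hab i0a ne (proj2 (andP i0a)));
  by [exact: (vertex_pts hab).1 | exact: (vertex_pts i0a).2 | lra].
Qed.

Lemma lift_01_1b_apart u : x b - 1 <= u <= x 0 -> edge_lift 0 1 u != edge_lift 1 b u.
Proof.
have [x0 x01 x1a xab xb1] := vertex_x_chain a_ge2 hab => hu.
have ne : (0, 1) <> (1, b)%N by [].
apply: (edge_lifts_apart i01 i1b ne (proj2 (andP i01)));
  by [exact: (vertex_pts i01).2 | exact: (vertex_pts i1b).1 | lra].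
Qed.

Lemma lift_ab_1b_apart u : x 0 <= u <= x 1 -> edge_lift a b u != edge_lift 1 b u.
Proof.
have [x0 x01 x1a xab xb1] := vertex_x_chain a_ge2 hab => hu.
have ne : (a, b) <> (1, b)%N by case=> e; move: a_ge2; rewrite e.
apply: (edge_lifts_apart hab i1b ne (proj2 (andP hab)));
  by [exact: (vertex_pts hab).2 | exact: (vertex_pts i1b).2 | lra].
Qed.

Lemma lift_ab_01_meet_once : ~ (exists u1 u2, x 1 < u1 < x a /\ x b - 1 < u2 < x 0 /\
  edge_lift a b u1 = edge_lift 0 1 (u1 - 1) /\ edge_lift a b u2 = edge_lift 0 1 u2).
Proof.
have [x0 x01 x1a xab xb1] := vertex_x_chain a_ge2 hab.
case=> u1 [u2 [hu1 [hu2 [e1 e2]]]].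
have [Lab L01] := (edge_liftP hab, edge_liftP i01).
have p2ab : pts (E a b) (frac u2, edge_lift a b u2) by apply: (lift_graph_pts Lab); lra.
have p2_01 : pts (E 0 1) (frac u2, edge_lift a b u2).
  by rewrite e2; apply: (lift_graph_pts L01); lra.
have p1ab : pts (E a b) (frac u1, edge_lift a b u1) by apply: (lift_graph_pts Lab); lra.
have p1_01 : pts (E 0 1) (frac u1, edge_lift a b u1).
  by rewrite e1 -fracB1; apply: (lift_graph_pts L01); lra.
have ne : (a, b) <> (0, 1)%N by case=> e; move: a_ge2; rewrite e.
case: (edges_meet_once hab i01 ne p2ab p2_01 p1ab p1_01) => /=.
rewrite (frac_id (_ : 0 <= u1 < 1)) => [fu _|]; last lra.
by have [] := frac_lift_cases (_ : -1 <= u2 < 1) fu; lra.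
Qed.

Let v0 : edge_lift 0 a (x 0) = edge_lift 0 1 (x 0).
Proof. by rewrite (lift_graph_p (edge_liftP i0a)) (lift_graph_p (edge_liftP i01)). Qed.
Let v1 : edge_lift 1 b (x 1) = edge_lift 0 1 (x 1 - 1).
Proof. by rewrite (lift_graph_p (edge_liftP i1b)) (lift_graph_q (edge_liftP i01)). Qed.
Let vb0 : edge_lift 0 b (x b - 1) = edge_lift a b (x b - 1).
Proof. by rewrite (lift_graph_q (edge_liftP i0b)) (lift_graph_q (edge_liftP hab)). Qed.
Let vb1 : edge_lift 1 b (x b - 1) = edge_lift a b (x b - 1).
Proof. by rewrite (lift_graph_q (edge_liftP i1b)) (lift_graph_q (edge_liftP hab)). Qed.

Lemma lift_0a_lt_0b : edge_lift 0 1 (x a - 1) < y a -> edge_lift 0 1 (x b - 1) < y b ->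
  forall u, x b - 1 <= u < x 0 -> edge_lift 0 a u < edge_lift 0 b u.
Proof.
have [x0 x01 x1a xab xb1] := vertex_x_chain a_ge2 hab.
have xb0 : x b - 1 < x 0 by lra.
rewrite -(lift_graph_p (edge_liftP hab)) -(lift_graph_q (edge_liftP hab)).
exact: (lifted_edges_ordered xb0 x01 x1a (edge_lift_cont i01) (edge_lift_cont i0a)
  (edge_lift_cont i0b) (edge_lift_cont hab) (edge_lift_cont i1b) v0 v1 vb0 vb1
  lift_0a_0b_apart lift_ab_0a_apart lift_01_1b_apart lift_ab_1b_apart lift_ab_01_meet_once).
Qed.

Lemma lift_0b_lt_0a : y a < edge_lift 0 1 (x a - 1) -> y b < edge_lift 0 1 (x b - 1) ->
  forall u, x b - 1 <= u < x 0 -> edge_lift 0 b u < edge_lift 0 a u.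
Proof.
have [x0 x01 x1a xab xb1] := vertex_x_chain a_ge2 hab.
have xb0 : x b - 1 < x 0 by lra.
rewrite -(lift_graph_p (edge_liftP hab)) -(lift_graph_q (edge_liftP hab)).
exact: (lifted_edges_ordered_rev xb0 x01 x1a (edge_lift_cont i01) (edge_lift_cont i0a)
  (edge_lift_cont i0b) (edge_lift_cont hab) (edge_lift_cont i1b) v0 v1 vb0 vb1
  lift_0a_0b_apart lift_ab_0a_apart lift_01_1b_apart lift_ab_1b_apart lift_ab_01_meet_once).
Qed.

End Quadrilateral.

Lemma relint_E01 k yk : (k < n)%N -> relint (E 0 1) (x k, yk) ->
  (2 <= k)%N /\ yk = edge_lift 0 1 (x k - 1).
Proof.
have i01 : (0 < 1 < n)%N by lia.
have x0 := vertex_x0_gt0; have x01 := vertex_x_lt i01.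
have [_ x11] := andP (vertex_x_itv n_ge2).
move=> kn /(lift_graph_relint (edge_liftP i01)) [u hu [fu ->]].
case: k kn fu => [|[|k]] kn fu.
- by exfalso; apply: (frac_lift_neq _ _ fu); lra.
- by exfalso; apply: (frac_lift_neq _ _ fu); lra.
have x1k : x 1 < x k.+2 by apply: vertex_x_lt; lia.
have [_ xk1] := andP (vertex_x_itv kn).
have hu' : -1 <= u < 1 by lra.
by split=> //; case: (frac_lift_cases hu' fu) => [e|->] //; lra.
Qed.

Lemma weakly_below_E0 i j : (0 < i < n)%N -> (0 < j < n)%N ->
  (forall u, x i - 1 < u < x 0 -> x j - 1 < u < x 0 -> edge_lift 0 i u <= edge_lift 0 j u) ->
  weakly_below (E 0 i) (E 0 j).
Proof.
move=> i0 j0 le_ij a yi yj /(lift_graph_relint (edge_liftP i0)) [u hu [fu ->]].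
move=> /(lift_graph_relint (edge_liftP j0)) [w hw [fw ->]].
have xi := vertex_x_lt i0; have xj := vertex_x_lt j0; have x0 := vertex_x0_gt0.
have [_ xi1] := andP (vertex_x_itv (proj2 (andP i0))).
have [_ xj1] := andP (vertex_x_itv (proj2 (andP j0))).
have uw : u = w by apply: frac_inj_near; rewrite ?fu ?fw //; lra.
by rewrite -uw; apply: le_ij; lra.
Qed.

Lemma E0_no_cross i j : (0 < i < n)%N -> (0 < j < n)%N -> i != j -> ~ cross (E 0 i) (E 0 j).
Proof.
move=> i0 j0 ij [[a yP] [ri [rj _]]].
have ne : (0, i) <> (0, j)%N by case=> e; move: ij; rewrite e eqxx.
have P0 := edges_meet_once i0 j0 ne (relint_pts ri) (relint_pts rj)
  (vertex_pts i0).1 (vertex_pts j0).1.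
have [u hu [fu _]] := lift_graph_relint (edge_liftP i0) ri.
have a0 : a = x 0 by rewrite -P0.
have xi := vertex_x_lt i0; have x0 := vertex_x0_gt0.
have [_ x0_lt1] := andP (vertex_x_itv (leq_trans (isT : 0 < 2)%N n_ge2)).
by apply: (frac_lift_neq _ _ fu); lra.
Qed.

Lemma prec_E0 i j : (0 < i < n)%N -> (0 < j < n)%N -> i != j ->
  weakly_below (E 0 i) (E 0 j) -> prec (E 0 i) (E 0 j).
Proof.
move=> i0 j0 ij le_ij; split=> //; split; first exact: E0_no_cross.
split; last by left.
case: flagE => _ [_ [_ [_ [_ [_ hzero]]]]].
by have [[yi ri] [yj rj]] := (hzero _ _ i0, hzero _ _ j0); exists 0, yi, yj.
Qed.

Lemma above_E01_prec a b : (a < b < n)%N ->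
  above (v a) (E 0 1) -> above (v b) (E 0 1) -> prec (E 0 a) (E 0 b).
Proof.
move=> hab [ya [ra lta]] [yb [rb ltb]]; have /andP[ab bn] := hab.
have [a2 ea] := relint_E01 (ltn_trans ab bn) ra; have [_ eb] := relint_E01 bn rb.
apply: prec_E0; rewrite ?neq_ltn ?ab //; try lia.
apply: weakly_below_E0; try lia.
by move=> u hua hub; apply/ltW/(lift_0a_lt_0b a2 hab); rewrite -?ea -?eb //; lra.
Qed.

Lemma below_E01_prec a b : (a < b < n)%N ->
  below (v a) (E 0 1) -> below (v b) (E 0 1) -> prec (E 0 b) (E 0 a).
Proof.
move=> hab [ya [ra lta]] [yb [rb ltb]]; have /andP[ab bn] := hab.
have [a2 ea] := relint_E01 (ltn_trans ab bn) ra; have [_ eb] := relint_E01 bn rb.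
apply: prec_E0; rewrite ?neq_ltn ?ab ?orbT //; try lia.
apply: weakly_below_E0; try lia.
by move=> u hub hua; apply/ltW/(lift_0b_lt_0a a2 hab); rewrite -?ea -?eb //; lra.
Qed.

End Flag.

Theorem lemma13 (R : realType) (n : nat) (v : nat -> @pt R)
  (E : nat -> nat -> @carc R) :
  (2 <= n)%N -> flag n v E ->
  (forall i1 i2, (i1 < i2 < n)%N ->
     above (v i1) (E 0 1)%N -> above (v i2) (E 0 1)%N ->
     prec (E 0 i1)%N (E 0 i2)%N) /\
  (forall i1 i2, (i1 < i2 < n)%N ->
     below (v i1) (E 0 1)%N -> below (v i2) (E 0 1)%N ->
     prec (E 0 i2)%N (E 0 i1)%N).
Proof. by move=> n2 hf; split; [exact: above_E01_prec | exact: below_E01_prec]. Qed.
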